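(* Let $W(x,x')=\tfrac12Px\cdot x-Lx\cdot x'+\tfrac12Qx'\cdot x'$ with $P,Q$ real symmetric and $L$ real invertible, let $m\in\mathbb{Z}$ with $m$ even iff $\det L>0$, and assume $\det(S_W-I)\neq0$. Set $\nu(\widehat S_{W,m})=m-\operatorname{Inert}(P+Q-L-L^T)$. Then $$\nu(\widehat S_{W,m})\equiv n+\tfrac1\pi\arg\det(S_W-I)\pmod 2,$$ i.e. $\nu(\widehat S_{W,m})\equiv n \pmod 2$ if $\det(S_W-I)>0$ and $\nu(\widehat S_{W,m})\equiv n+1\pmod 2$ if $\det(S_W-I)<0$.
   Context: $S_W\in\operatorname{Sp}(n)$ is the symplectic matrix generated by $W$: $(x,p)=S_W(x',p')\iff p=\partial_xW(x,x'),\ p'=-\partial_{x'}W(x,x')$. $\widehat S_{W,m}$ is the quadratic Fourier transform $\widehat S_{W,m}\psi(x)=e^{-in\pi/4}(2\pi\hbar)^{-n/2}i^m\sqrt{|\det L|}\int e^{\frac i\hbar W(x,x')}\psi(x')d^nx'$. $\operatorname{Inert}A$ denotes the number of negative eigenvalues of a real symmetric matrix $A$; $\arg$ of a nonzero real number is $0$ if positive and $\pi$ if negative. *)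

From HB Require Import structures.
From mathcomp Require Import all_boot all_order all_algebra.
From mathcomp Require Import spectral.
Set Implicit Arguments. Unset Strict Implicit. Unset Printing Implicit Defensive.
Import Order.TTheory GRing.Theory Num.Theory.
Local Open Scope ring_scope.

(* Real matrices are modelled as matrices with real (Num.real) entries over an
   arbitrary numClosedFieldType C (e.g. the complex numbers), so that
   characteristic polynomials split and eigenvalues exist. *)

Definition eigenvalues_seq (C : numClosedFieldType) (n : nat) (A : 'M[C]_n) : seq C :=
  sval (closed_field_poly_normal (char_poly A)).

Definition Inert (C : numClosedFieldType) (n : nat) (A : 'M[C]_n) : nat :=
  count (fun z : C => z < 0) (eigenvalues_seq A).

(* The symplectic matrix S_W generated by
     W(x,x') = 1/2 P x.x - L x.x' + 1/2 Q x'.x',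
   acting on column vectors (x',p') |-> (x,p), where p = d_x W = P x - L^T x'
   and p' = - d_{x'} W = L x - Q x'.  Solving:
     x = L^{-1} Q x' + L^{-1} p',
     p = (P L^{-1} Q - L^T) x' + P L^{-1} p'. *)
Definition S_W (C : numClosedFieldType) (n : nat) (P L Q : 'M[C]_n) : 'M[C]_(n + n) :=
  block_mx (invmx L *m Q)                  (invmx L)
           (P *m invmx L *m Q - L^T)       (P *m invmx L).

Definition nu_index (C : numClosedFieldType) (n : nat) (P L Q : 'M[C]_n) (m : int) : int :=
  m - (Inert (P + Q - L - L^T))%:Z.

From HB Require Import structures.
From mathcomp Require Import all_boot all_order all_algebra zify ring.
From mathcomp Require Import spectral.
Set Implicit Arguments. Unset Strict Implicit. Unset Printing Implicit Defensive.
Import Order.TTheory GRing.Theory Num.Theory.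
Local Open Scope ring_scope.

(* Elementary block operations give
     det (S_W - 1) = (-1)^n det(L)^-1 det(P + Q - L - L^T).
   P + Q - L - L^T is real symmetric, so its determinant is a product of real
   eigenvalues and has sign (-1)^Inert(P + Q - L - L^T).  Hence the sign of
   det (S_W - 1) is (-1)^(n + [det L < 0] + Inert(P + Q - L - L^T)), and since
   m is odd exactly when det L < 0 this is (-1)^(n + nu) up to even terms. *)

Lemma det_S_W_sub1 (C : numClosedFieldType) (n : nat) (P L Q : 'M[C]_n) :
  L \in unitmx ->
  \det (S_W P L Q - 1%:M) = (-1) ^+ n * (\det L)^-1 * \det (P + Q - L - L^T).
Proof.
move=> Lu.
have SW1E : S_W P L Q - 1%:M = block_mx (invmx L *m Q - 1%:M) (invmx L)
                                  (P *m invmx L *m Q - L^T) (P *m invmx L - 1%:M).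
  by rewrite /S_W (scalar_mx_block n n) opp_block_mx add_block_mx ?subr0 ?sub0r ?oppr0 ?addr0.
have det_unitri (E : 'M[C]_n) : \det (block_mx 1%:M 0 E 1%:M) = 1.
  by rewrite det_lblock det1 mulr1.
(* Row operation R2 - P R1, then column operation C1 + (P - L^T) C2. *)
have reduce : block_mx 1%:M 0 (- P) 1%:M *m (S_W P L Q - 1%:M) *m
                block_mx 1%:M 0 (P - L^T) 1%:M
              = block_mx (invmx L *m (P + Q - L - L^T)) (invmx L) 0 (- 1%:M).
  rewrite SW1E !mulmx_block ?mul1mx ?mul0mx ?addr0 ?add0r ?mulmx1 ?mulmx0 ?addr0 ?add0r.
  rewrite ?mulmxBl ?mulmxBr ?mulNmx ?mul1mx ?mulmx1 ?mulmxA.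
  congr block_mx.
  - by rewrite mulmxDr mulVmx // addrACA (addrC (invmx L *m Q)) !addrA.
  - rewrite addKr !mulNmx !mul1mx opprK.
    rewrite (addrC (- _) P) -[P + _ + _]addrA addKr (addrC (- P)) -opprB.
    by rewrite opprK opprB addrA subrK subrr.
  - by rewrite addKr.
have := congr1 determinant reduce.
rewrite !det_mulmx !det_unitri mul1r mulr1 => ->.
have -> : - (1%:M : 'M[C]_n) = (-1)%:M by rewrite raddfN.
rewrite det_ublock det_mulmx det_inv det_scalar.
by rewrite mulrC mulrA.
Qed.

Lemma char_poly_similar (R : comUnitRingType) (n : nat) (U A : 'M[R]_n) :
  U \in unitmx -> char_poly (invmx U *m A *m U) = char_poly A.
Proof.
move=> Uu; rewrite /char_poly /char_poly_mx !map_mxM.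
set iU := map_mx polyC (invmx U); set U' := map_mx polyC U.
have iUU : iU *m U' = 1%:M by rewrite /iU /U' -map_mxM mulVmx // map_mx1.
have XE : ('X%:M : 'M[{poly R}]_n) = iU *m 'X%:M *m U'.
  by rewrite mul_mx_scalar -scalemxAl iUU scalemx1.
by rewrite {1}XE -mulmxBl -mulmxBr !det_mulmx mulrAC -det_mulmx iUU det1 mul1r.
Qed.

Lemma eigenvalues_seqP (C : numClosedFieldType) (n : nat) (A : 'M[C]_n) (s : seq C) :
  char_poly A = \prod_(x <- s) ('X - x%:P) -> perm_eq (eigenvalues_seq A) s.
Proof.
move=> cpA; apply: prod_XsubC_eq; rewrite -cpA /eigenvalues_seq.
case: closed_field_poly_normal => r /= ->.
by rewrite (monicP (char_poly_monic A)) scale1r.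
Qed.

Section NormalMatrix.
Variables (C : numClosedFieldType) (n : nat) (A : 'M[C]_n).
Hypothesis A_normal : A \is normalmx.

Let spectral_seq := [seq spectral_diag A 0 i | i <- enum 'I_n].

Lemma eigenvalues_seq_normalmx : perm_eq (eigenvalues_seq A) spectral_seq.
Proof.
apply: eigenvalues_seqP; have /orthomx_spectralP -> := A_normal.
rewrite char_poly_similar ?spectral_unit //.
rewrite char_poly_trig ?is_diag_mx_is_trig ?diag_mx_is_diag // big_map big_enum.
by apply: eq_bigr => i _; rewrite mxE eqxx mulr1n.
Qed.

Lemma det_normalmx : \det A = \prod_(x <- eigenvalues_seq A) x.
Proof.
rewrite (perm_big _ eigenvalues_seq_normalmx) big_map big_enum /=.
have /orthomx_spectralP {1}-> := A_normal.
have detU0 : \det (spectralmx A) != 0 by rewrite -unitfE -unitmxE spectral_unit.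
by rewrite !det_mulmx det_inv mulrAC mulVf // mul1r det_diag.
Qed.

End NormalMatrix.

Lemma hermsymmx_eigenvalues_real (C : numClosedFieldType) (n : nat) (A : 'M[C]_n) :
  A \is hermsymmx -> all (fun x => x \is Num.real) (eigenvalues_seq A).
Proof.
move=> Aherm; rewrite (perm_all _ (eigenvalues_seq_normalmx (hermitian_normalmx Aherm))).
apply/allP => _ /mapP [i _ ->].
by move/mxOverP: (hermitian_spectral_diag_real Aherm); apply.
Qed.

Lemma real_sign_gt0 (R : numDomainType) (x : R) :
  x \is Num.real -> x != 0 -> 0 < (-1) ^+ (x < 0)%R * x.
Proof.
move=> xr x0; have [xlt0|xgt0|xeq0] := real_ltgtP xr (rpred0 _).
- by rewrite expr1 mulN1r oppr_gt0.
- by rewrite expr0 mul1r.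
- by move: x0; rewrite xeq0 eqxx.
Qed.

Lemma prod_real_sign_gt0 (R : numDomainType) (s : seq R) :
  all (fun x => x \is Num.real) s -> all (fun x => x != 0) s ->
  0 < (-1) ^+ count (fun x => x < 0)%R s * \prod_(x <- s) x.
Proof.
elim: s => [|x s IH] /=; first by rewrite big_nil mulr1 ltr01.
move=> /andP[xr sr] /andP[x0 s0].
rewrite big_cons exprD mulrACA.
exact: mulr_gt0 (real_sign_gt0 xr x0) (IH sr s0).
Qed.

Lemma Inert_det_sign_gt0 (C : numClosedFieldType) (n : nat) (A : 'M[C]_n) :
  A \is hermsymmx -> \det A != 0 -> 0 < (-1) ^+ Inert A * \det A.
Proof.
move=> Aherm; rewrite /Inert det_normalmx ?hermitian_normalmx // => detA0.
apply: prod_real_sign_gt0; first exact: hermsymmx_eigenvalues_real.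
by move: detA0; rewrite prodf_seq_neq0.
Qed.

Lemma det_realmx (C : numClosedFieldType) (n : nat) (A : 'M[C]_n) :
  A \is a realmx -> \det A \is Num.real.
Proof.
move=> /mxOverP Ar; apply: rpred_sum => s _.
apply: rpredM; first by apply: rpredX; rewrite realN real1.
by apply: rpred_prod => i _; apply: Ar.
Qed.

Lemma sign_parity (R : numDomainType) (x : R) (k : nat) :
  0 < (-1) ^+ k * x -> (0 < x -> ~~ odd k) /\ (x < 0 -> odd k).
Proof.
rewrite -signr_odd; case: (odd k) => /=; rewrite ?expr1 ?mulN1r ?oppr_gt0 ?expr0 ?mul1r.
- by move=> xlt0; split=> // xgt0; have := lt_trans xlt0 xgt0; rewrite ltxx.
- by move=> xgt0; split=> // xlt0; have := lt_trans xlt0 xgt0; rewrite ltxx.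
Qed.

Lemma subz_nat_mod2 (m : int) (n k : nat) :
  (m - k%:Z = n%:Z + (odd (n + odd `|m| + k))%:Z %[mod 2])%Z.
Proof. lia. Qed.

Lemma det_S_W_sub1_sign (C : numClosedFieldType) (n : nat) (P L Q : 'M[C]_n) :
  P \is a realmx -> Q \is a realmx -> L \is a realmx -> P^T = P -> Q^T = Q ->
  L \in unitmx -> \det (S_W P L Q - 1%:M) != 0 ->
  0 < (-1) ^+ (n + (\det L < 0)%R + Inert (P + Q - L - L^T)) * \det (S_W P L Q - 1%:M).
Proof.
move=> Pr Qr Lr Ps Qs Lu detSW1_neq0.
set M := P + Q - L - L^T.
have Mr : M \is a realmx.
  apply/mxOverP => i j; move/mxOverP: Pr => Pr; move/mxOverP: Qr => Qr.
  by move/mxOverP: Lr => Lr; rewrite !mxE ?rpredB ?rpredD.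
have Msym : M \is symmetricmx.
  apply/is_hermitianmxP; rewrite expr0 scale1r map_mx_id //.
  by rewrite /M !raddfB raddfD /= trmxK Ps Qs addrAC.
have detM0 : \det M != 0.
  by apply: contraNneq detSW1_neq0; rewrite det_S_W_sub1 // => ->; rewrite mulr0.
have detL0 : \det L != 0 by rewrite -unitfE -unitmxE.
have detLV_real : (\det L)^-1 \is Num.real by rewrite realV det_realmx.
have detLV_sign := real_sign_gt0 detLV_real (invr_neq0 detL0).
have detM_sign := Inert_det_sign_gt0 (realsym_hermsym Msym Mr) detM0.
rewrite det_S_W_sub1 // -/M !exprD -invr_lt0.
have regroup (a s t b d : C) : a * s * t * (a * b * d) = a ^+ 2 * (s * b) * (t * d).
  by ring.
by rewrite regroup sqrr_sign mul1r mulr_gt0.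
Qed.

Theorem mainTheorem5 (C : numClosedFieldType) (n : nat) (P L Q : 'M[C]_n) (m : int) :
  P \is a realmx -> Q \is a realmx -> L \is a realmx ->
  P^T = P -> Q^T = Q ->
  L \in unitmx ->
  (~~ odd `|m|%N = (0 < \det L)) ->
  \det (S_W P L Q - 1%:M) != 0 ->
  (0 < \det (S_W P L Q - 1%:M) ->
     (nu_index P L Q m = n%:Z %[mod 2])%Z) /\
  (\det (S_W P L Q - 1%:M) < 0 ->
     (nu_index P L Q m = n%:Z + 1 %[mod 2])%Z).
Proof.
move=> Pr Qr Lr Ps Qs Lu m_parity detSW1_neq0.
have detL_odd : (\det L < 0) = odd `|m|%N.
  have detL0 : \det L != 0 by rewrite -unitfE -unitmxE.
  rewrite -[odd _]negbK m_parity.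
  by case: (real_ltgtP (det_realmx Lr) (rpred0 _)) detL0 => //; rewrite eqxx.
have := det_S_W_sub1_sign Pr Qr Lr Ps Qs Lu detSW1_neq0.
rewrite detL_odd => /sign_parity[even_sign odd_sign].
rewrite /nu_index (subz_nat_mod2 m n).
by split=> [/even_sign/negPf -> | /odd_sign ->]; rewrite ?addr0.
Qed.
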